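(* Let $g$ be a partial function from $X^M$ to a set $Y$. Then there are a hereditarily thrifty partial function $g'\subseteq g$ and a partial function $h$ from $X^M$ to $X^M$ in $\mathscr C_I$ such that $g=g'\circ h$. In particular, if $Y=X$ and $g\in\mathscr C_J$, then $g'\in\mathscr C_J$, so every (partial) $\mathscr C_J$-function is the composition of a hereditarily thrifty $\mathscr C_J$-function with a $\mathscr C_I$-function.
   Context: $X=\omega\times\omega$, elements $(a|b)$ ($x$-coordinate $a$, $y$-coordinate $b$); $M=\{1,\dots,m\}$. Width of $Y\subseteq X$: $\sup_n|Y\cap(\omega\times\{n\})|$; $I$ = ideal of subsets of $X$ of finite width; $J$ = ideal of subsets of $X$ meeting each line $\omega\times\{n\}$ in a finite set. For an ideal $K$, $\mathscr C_K$ is the set of finitary operations $f:X^n\to X$ with $f[A^n]\in K$ for all $A\in K$; a partial function from $X^M$ to $X$ is in $\mathscr C_K$ iff it has a total extension in $\mathscr C_K$, and a partial function from $X^M$ to $X^M$ is in $\mathscr C_K$ iff each component is. For a finite index set $N$, $B^N_k=\{u\in X^N:\exists i\in N\,((u_i)^y<k)\}$; bounded = contained in some $B^N_k$; a partial $p$ from $X^N$ to $Y$ is thrifty iff $p^{-1}[d]$ is bounded for all $d\in Y$. For $S\subseteq M$, $T=M\setminus S$, $c\in X^S$: $p_{\cup c}(z)=p(z\cup c)$ for $z\in X^T$. A partial $p$ from $X^M$ to $Y$ is hereditarily thrifty iff $p_{\cup c}$ is thrifty for every proper subset $S\subsetneq M$ and every $c\in X^S$. Composition of partial functions: $(g'\circ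 h)(u)$ defined iff $h(u)$ defined and in $\operatorname{dom}(g')$. *)

From mathcomp Require Import all_boot.
Set Implicit Arguments. Unset Strict Implicit. Unset Printing Implicit Defensive.

(* X = omega x omega; an element (a|b) is the pair (a, b); x-coordinate a = .1,
   y-coordinate b = .2 *)
Definition X : Type := (nat * nat)%type.

(* line omega x {n}: points with y-coordinate n.
   Y has finite width: sup_n |Y ∩ (omega x {n})| < omega. *)
Definition I_ideal (A : X -> Prop) : Prop :=
  exists w : nat, forall n : nat,
    exists l : seq nat, size l <= w /\ forall a, A (a, n) -> a \in l.

Definition J_ideal (A : X -> Prop) : Prop :=
  forall n : nat, exists l : seq nat, forall a, A (a, n) -> a \in l.

Definition inC (K : (X -> Prop) -> Prop) (N : Type) (f : (N -> X) -> X) : Prop :=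
  forall A : X -> Prop, K A ->
    K (fun x => exists u : N -> X, (forall i, A (u i)) /\ f u = x).

(* partial functions are modelled as functions into option *)
Definition pinC (K : (X -> Prop) -> Prop) (N : Type) (p : (N -> X) -> option X) : Prop :=
  exists f : (N -> X) -> X, inC K f /\ forall u x, p u = Some x -> f u = x.

Definition pinC_vec (K : (X -> Prop) -> Prop) (N : Type)
  (h : (N -> X) -> option (N -> X)) : Prop :=
  forall i : N, pinC K (fun u => omap (fun v => v i) (h u)).

Definition psub (A B : Type) (p q : A -> option B) : Prop :=
  forall a b, p a = Some b -> q a = Some b.

Definition pf_comp (A B C : Type) (g : B -> option C) (h : A -> option B) : A -> option C :=
  fun a => match h a with Some b => g b | None => None end.

(* p : X^N -> Y partial is thrifty: p^{-1}[d] is bounded, i.e. contained in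
   some B^N_k = {u | exists i, (u_i)^y < k} *)
Definition thrifty (N Y : Type) (p : (N -> X) -> option Y) : Prop :=
  forall d : Y, exists k : nat, forall u : N -> X, p u = Some d ->
    exists i : N, (u i).2 < k.

(* z ∪ c for z in X^T, c in X^S, where T is the complement of S in 'I_m *)
Definition union_pt (m : nat) (S : {set 'I_m})
  (z : {i : 'I_m | i \notin S} -> X) (c : {i : 'I_m | i \in S} -> X) : 'I_m -> X :=
  fun i => match (insub i : option {i : 'I_m | i \notin S}) with
           | Some t => z t
           | None => match (insub i : option {i : 'I_m | i \in S}) with
                     | Some s => c s
                     | None => (0, 0)  (* unreachable *)
                     end
           end.

Definition hered_thrifty (m : nat) (Y : Type) (p : ('I_m -> X) -> option Y) : Prop :=
  forall S : {set 'I_m}, S != [set: 'I_m] ->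
    forall c : {i : 'I_m | i \in S} -> X,
      thrifty (fun z : {i : 'I_m | i \notin S} -> X => p (union_pt z c)).

From mathcomp Require Import all_boot.
From Stdlib Require Import Classical ClassicalEpsilon FunctionalExtensionality.

Set Implicit Arguments. Unset Strict Implicit. Unset Printing Implicit Defensive.

(* Fix g on V = X^M.  Call a set S of coordinates "unbounded at u"
   if u can be moved, keeping its coordinates in S and its g-value, so that all
   other coordinates are arbitrarily high; the "core" of u is a minimal such S.
   Points with the same core, the same coordinates on it and the same g-value
   form a class; classes are indexed by the least code (V is countable) of one
   of their members.  For the class of index n we choose a representative
   rep n whose coordinates off the core are higher than (a) every coordinate of
   the earlier representatives and (b) every bound witnessing that the proper
   subsets of the core are not unbounded.  Then h u := rep (class of u) and
   g' := g restricted to the range of h.  By (a), the height of a non-core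
   coordinate of rep n determines n, so each coordinate of h maps sets of
   finite width to sets of width one larger: h is in C_I.  By (b) and the
   minimality of cores, g' is hereditarily thrifty.  The C_J statement follows
   because C_J is closed under passing to sub-functions. *)

(* Classical boolean reflection of a proposition, so that the choice
   operators of the library over boolean predicates (ex_minn, ex_minset)
   apply to propositional ones. *)
Definition holds (P : Prop) : bool :=
  if excluded_middle_informative P then true else false.

Lemma holdsP (P : Prop) : reflect P (holds P).
Proof. by rewrite /holds; case: excluded_middle_informative => h; constructor. Qed.

Lemma holds_iff (P Q : Prop) : (P <-> Q) -> holds P = holds Q.
Proof. by move=> PQ; apply/holdsP/holdsP => /PQ. Qed.

Lemma finite_uniform_bound (T : finType) (P : T -> nat -> Prop) :
  (forall t k k', k <= k' -> P t k -> P t k') ->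
  (forall t, exists k, P t k) -> exists k, forall t, P t k.
Proof.
move=> up exP; pose kt t := epsilon (inhabits 0) (P t).
exists (\max_t kt t) => t; apply: (up t (kt t)); first exact: leq_bigmax.
exact: epsilon_spec (exP t).
Qed.

Lemma pinC_psub (K : (X -> Prop) -> Prop) (N : Type) (p q : (N -> X) -> option X) :
  psub p q -> pinC K q -> pinC K p.
Proof. by move=> pq [f [fK fq]]; exists f; split=> // u x /pq; apply: fq. Qed.

Definition decode (m : nat) (n : nat) : 'I_m -> X :=
  if unpickle n is Some f then fun i => (f : {ffun 'I_m -> X}) i
  else fun _ => (0, 0).
Arguments decode : clear implicits.

Lemma decode_onto (m : nat) (u : 'I_m -> X) : exists n, decode m n = u.
Proof.
exists (pickle ([ffun i => u i] : {ffun 'I_m -> X})); rewrite /decode pickleK.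
by apply: functional_extensionality => i; rewrite ffunE.
Qed.

Lemma union_pt_in (m : nat) (S : {set 'I_m}) z z' c i :
  i \in S -> @union_pt m S z c i = union_pt z' c i.
Proof. by move=> iS; rewrite /union_pt; case: insubP => // t; rewrite iS. Qed.

Lemma union_pt_out (m : nat) (S : {set 'I_m}) z c (t : {i : 'I_m | i \notin S}) :
  @union_pt m S z c (val t) = z t.
Proof. by case: t => i iS; rewrite /union_pt insubT. Qed.

Section Factorization.
Variables (m : nat) (Y : Type) (g : ('I_m -> X) -> option Y).
Notation V := ('I_m -> X).
Implicit Types (u v w : V) (S : {set 'I_m}).

Definition agree S u v := forall i, i \in S -> v i = u i.

Definition unbounded u S := forall k, exists v,
  agree S u v /\ g v = g u /\ forall i, i \notin S -> k <= (v i).2.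

Lemma unbounded_setT u : exists S, holds (unbounded u S).
Proof.
by exists setT; apply/holdsP => k; exists u; split=> //; split=> // i; rewrite in_setT.
Qed.

Definition core u : {set 'I_m} := sval (ex_minset (unbounded_setT u)).

Lemma core_unbounded u : unbounded u (core u).
Proof. by rewrite /core; case: ex_minset => S /= /minsetp /holdsP. Qed.

Lemma core_minimal u S : S \proper core u -> ~ unbounded u S.
Proof.
rewrite /core; case: ex_minset => C /= /minsetP [_ minC].
by case/andP=> sSC nCS /holdsP/minC/(_ sSC) eSC; rewrite eSC subxx in nCS.
Qed.

Definition same_class w u := core w = core u /\ agree (core u) u w /\ g w = g u.

Lemma class_coded u : exists n, holds (same_class (decode m n) u).
Proof. by have [n <-] := decode_onto u; exists n; apply/holdsP. Qed.

Definition key u : nat := ex_minn (class_coded u).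

Lemma key_class u : same_class (decode m (key u)) u.
Proof. by rewrite /key; case: ex_minnP => n /holdsP. Qed.

Lemma key_eq u u' :
  core u = core u' -> agree (core u) u u' -> g u = g u' -> key u = key u'.
Proof.
move=> ec au eg; apply: eq_ex_minn => n; apply: holds_iff.
rewrite /same_class -ec eg; split=> -[-> [aw ->]]; split=> //; split=> // i iC.
  by rewrite aw // au.
by rewrite aw // -au.
Qed.

Definition keeps_low S (c : V) (d : option Y) k :=
  forall v, agree S c v -> g v = d -> exists i, i \notin S /\ (v i).2 < k.

Definition low_bound S (c : V) (d : option Y) : nat :=
  epsilon (inhabits 0) (keeps_low S c d).

(* The restriction of u to S; low_bound depends on u only through it. *)
Definition restrict S u : V := fun i => if i \in S then u i else (0, 0).

Lemma agree_restrict S u v : agree S (restrict S u) v <-> agree S u v.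
Proof. by split=> a i iS; move: (a i iS); rewrite /restrict iS. Qed.

Lemma low_bound_spec u S : ~ unbounded u S ->
  keeps_low S (restrict S u) (g u) (low_bound S (restrict S u) (g u)).
Proof.
move=> notU; apply: epsilon_spec; apply: NNPP => noK; apply: notU => k.
apply: NNPP => noV; apply: noK; exists k => v /agree_restrict avu gv; apply: NNPP => noI.
apply: noV; exists v; split=> //; split=> // i iS.
by rewrite leqNgt; apply/negP => lt; apply: noI; exists i.
Qed.

Definition all_low_bounds u : nat := \max_S low_bound S (restrict S u) (g u).

Definition high_member_spec n k v :=
  agree (core (decode m n)) (decode m n) v /\ g v = g (decode m n) /\
  forall i, i \notin core (decode m n) -> k < (v i).2.

Definition high_member n k : V :=
  epsilon (inhabits (fun _ => (0, 0))) (high_member_spec n k).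

Lemma high_member_correct n k : high_member_spec n k (high_member n k).
Proof.
apply: epsilon_spec; have [v [avu [gv hv]]] := core_unbounded (decode m n) k.+1.
by exists v; split=> //; split=> // i /hv.
Qed.

(* The representatives: rep n clears the ceiling left by rep 0 .. rep n.-1 and
   all the low bounds of its class. *)
Definition top_height (v : V) : nat := \max_i (v i).2.

Definition rep_above n k : V := high_member n (maxn k (all_low_bounds (decode m n))).

Fixpoint ceiling n : nat :=
  if n is n'.+1 then maxn (ceiling n') (top_height (rep_above n' (ceiling n'))) else 0.

Definition rep n : V := rep_above n (ceiling n).

Lemma ceiling_succ n : ceiling n.+1 = maxn (ceiling n) (top_height (rep n)).
Proof. by []. Qed.

Lemma rep_spec n :
  [/\ agree (core (decode m n)) (decode m n) (rep n), g (rep n) = g (decode m n)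
    & forall i, i \notin core (decode m n) ->
        ceiling n < (rep n i).2 /\ all_low_bounds (decode m n) < (rep n i).2].
Proof.
have [agr [gv hv]] := high_member_correct n (maxn (ceiling n) (all_low_bounds (decode m n))).
by split=> // i /hv; rewrite gtn_max => /andP.
Qed.

Lemma rep_below_ceiling n n' i : n < n' -> (rep n i).2 <= ceiling n'.
Proof.
have mono : {homo ceiling : a b / a <= b}.
  by apply: homo_leq => [//|a b c|a]; [exact: leq_trans|exact: leq_maxl].
move=> /mono; apply: leq_trans; rewrite ceiling_succ leq_max /top_height.
by rewrite (@leq_bigmax _ (fun j => (rep n j).2)) orbT.
Qed.

Lemma rep_height_inj n n' i :
  i \notin core (decode m n) -> i \notin core (decode m n') ->
  (rep n i).2 = (rep n' i).2 -> n = n'.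
Proof.
have above k j : j \notin core (decode m k) -> ceiling k < (rep k j).2.
  by case: (rep_spec k) => _ _ /(_ j) h /h [].
wlog lt : n n' / n < n' => [hyp|] ni ni' e.
  by case: (ltngtP n n') => [lt|lt|//]; [apply: hyp|symmetry; apply: hyp].
by move: (above _ _ ni'); rewrite -e ltnNge rep_below_ceiling.
Qed.

Definition hmap u : option V := if g u is Some _ then Some (rep (key u)) else None.

Definition in_range v := exists u, g u <> None /\ rep (key u) = v.

Definition gsub v : option Y := if holds (in_range v) then g v else None.

Lemma rep_key_agree u : agree (core u) u (rep (key u)).
Proof.
have [ec [au _]] := key_class u; have [ar _ _] := rep_spec (key u).
by move=> i iC; rewrite ar ?ec // au.
Qed.

Lemma g_rep_key u : g (rep (key u)) = g u.
Proof. by have [_ -> _] := rep_spec (key u); case: (key_class u) => _ []. Qed.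

Lemma gsub_psub : psub gsub g.
Proof. by move=> v y; rewrite /gsub; case: holdsP. Qed.

Lemma gsub_comp u : g u = pf_comp gsub hmap u.
Proof.
rewrite /pf_comp /hmap; case gu: (g u) => [y|] //.
by rewrite /gsub ifT ?g_rep_key //; apply/holdsP; exists u; rewrite gu.
Qed.

Lemma rep_line_point i t : exists a0, forall u,
  i \notin core u -> (rep (key u) i).2 = t -> (rep (key u) i).1 = a0.
Proof.
case: (classic (exists u0, i \notin core u0 /\ (rep (key u0) i).2 = t)) =>
  [[u0 [i0 t0]]|none]; last by exists 0 => u iu tu; case: none; exists u.
exists (rep (key u0) i).1 => u iu tu; suff -> : key u = key u0 by [].
have nc w : i \notin core w -> i \notin core (decode m (key w)).
  by case: (key_class w) => ->.
by apply: rep_height_inj (nc _ iu) (nc _ i0) _; rewrite tu t0.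
Qed.

Lemma hmap_in_I : pinC_vec I_ideal hmap.
Proof.
move=> i; exists (fun u => rep (key u) i); split; last first.
  by move=> u x; rewrite /hmap; case: (g u) => //= _ [].
move=> A [w wA]; exists w.+1 => t; have [l [sl lA]] := wA t.
have [a0 line] := rep_line_point i t.
exists (a0 :: l); split=> // a [u [uA ua]]; rewrite inE.
case: (boolP (i \in core u)) => iu.
  by rewrite lA ?orbT // -ua (rep_key_agree iu).
by move: (line u iu); rewrite ua => /(_ erefl) /= ->; rewrite eqxx.
Qed.

Section Thrifty.
Variables (S' : {set 'I_m}) (c : V) (d : Y).
Hypothesis S'_proper : S' != setT.

Definition escapes S k := forall u, g u = Some d -> core u = S ->
  agree S' c (rep (key u)) -> exists i, i \notin S' /\ (rep (key u) i).2 < k.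

(* A core inside S': all relevant points lie in a single class. *)
Lemma escapes_core_inside S : S \subset S' -> exists k, escapes S k.
Proof.
move=> sSS'; have [i0 _ i0S'] : exists2 i0, i0 \in setT & i0 \notin S'.
  by apply/subsetPn; rewrite subTset.
case: (classic (exists u0, g u0 = Some d /\ core u0 = S /\ agree S' c (rep (key u0))))
  => [[u0 [g0 [c0 a0]]]|none]; last by exists 0 => u gu cu au; case: none; exists u.
exists (rep (key u0) i0).2.+1 => u gu cu au; exists i0; split=> //.
have on_c w : core w = S -> agree S' c (rep (key w)) -> forall j, j \in S -> w j = c j.
  by move=> cw aw j jS; rewrite -(@rep_key_agree w j) ?cw // aw // (subsetP sSS').
rewrite (@key_eq u u0) ?cu ?c0 ?gu ?g0 // => j jS.
by rewrite (on_c u0) ?(on_c u).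
Qed.

(* A core sticking out of S': its trace on S' is a proper subset of the core,
   hence not unbounded, and rep (key u) clears the corresponding low bound. *)
Lemma escapes_core_outside S : ~~ (S \subset S') -> exists k, escapes S k.
Proof.
move=> nsSS'; set T := S :&: S'.
have TS : T \proper S.
  by rewrite properEneq subsetIl andbT; apply: contra nsSS' => /eqP <-; exact: subsetIr.
exists (low_bound T (restrict T c) (Some d)) => u gu cu au.
set n := key u; set w := decode m n.
have [cw [_ gw]] : same_class w u := key_class u.
have [ar gr hr] := rep_spec n; rewrite -/w in ar gr hr; rewrite cw cu in ar hr.
have rT : restrict T w = restrict T c.
  apply: functional_extensionality => j; rewrite /restrict.
  by case: ifP => // /setIP [jS jS']; rewrite -(ar j jS) (au j jS').
have notU : ~ unbounded w T by apply: core_minimal; rewrite cw cu.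
have arT : agree T (restrict T w) (rep n).
  by apply/agree_restrict => j /setIP [jS _]; apply: ar.
have [i [iT hi]] := low_bound_spec notU arT gr; rewrite rT gw gu in hi.
case: (boolP (i \in S)) => iS.
  by exists i; split=> //; apply: contra iT => iS'; rewrite inE iS iS'.
have le := @leq_bigmax _ (fun T => low_bound T (restrict T w) (g w)) T.
rewrite -/(all_low_bounds w) rT gw gu in le.
by have := leq_ltn_trans le (hr i iS).2; rewrite ltnNge (ltnW hi).
Qed.

Lemma gsub_fibre_thrifty : exists k, forall v,
  agree S' c v -> gsub v = Some d -> exists i, i \notin S' /\ (v i).2 < k.
Proof.
have [k esc] : exists k, forall S, escapes S k.
  apply: finite_uniform_bound => [S k k' kk' e u gu cu au|S].
    by have [i [iS' lt]] := e u gu cu au; exists i; split=> //; apply: leq_trans kk'.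
  by case: (boolP (S \subset S')); [exact: escapes_core_inside|exact: escapes_core_outside].
exists k => v; rewrite /gsub; case: holdsP => // -[u [_ <-]] av.
by rewrite g_rep_key => gu; apply: esc gu erefl av.
Qed.

End Thrifty.

Lemma gsub_hered_thrifty : hered_thrifty gsub.
Proof.
move=> S' S'_proper c0 d.
have [k kd] := gsub_fibre_thrifty (union_pt (fun _ => (0, 0)) c0) d S'_proper.
exists k => z /kd [|i [iS' lt]]; first by move=> i; apply: union_pt_in.
by exists (exist _ i iS'); rewrite -(union_pt_out z c0).
Qed.

End Factorization.

Theorem mainTheorem8 (m : nat) :
  (forall (Y : Type) (g : ('I_m -> X) -> option Y),
     exists (g' : ('I_m -> X) -> option Y) (h : ('I_m -> X) -> option ('I_m -> X)),
       psub g' g /\ hered_thrifty g' /\ pinC_vec I_ideal h /\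
       forall u, g u = pf_comp g' h u)
  /\
  (forall g : ('I_m -> X) -> option X, pinC J_ideal g ->
     exists (g' : ('I_m -> X) -> option X) (h : ('I_m -> X) -> option ('I_m -> X)),
       psub g' g /\ hered_thrifty g' /\ pinC J_ideal g' /\ pinC_vec I_ideal h /\
       forall u, g u = pf_comp g' h u).
Proof.
split=> [Y g|g gJ]; exists (gsub g), (hmap g).
  by do !split; [exact: gsub_psub|exact: gsub_hered_thrifty|exact: hmap_in_I|exact: gsub_comp].
do !split; [exact: gsub_psub|exact: gsub_hered_thrifty| |exact: hmap_in_I|exact: gsub_comp].
exact: pinC_psub (@gsub_psub _ _ g) gJ.
Qed.
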